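(* Let $1\le p<\infty$. The correspondence $E\mapsto\ell_p^{mid}(E)$ is a finitely determined sequence class; that is: for every Banach space $E$, $c_{00}(E)\subseteq\ell_p^{mid}(E)$ and $\sup_j\|x_j\|\le\|(x_j)_{j}\|_{mid,p}$ for every $(x_j)_j\in\ell_p^{mid}(E)$; the canonical unit scalar sequences satisfy $\|e_j\|_{mid,p}=1$ in $\ell_p^{mid}(\mathbb{K})$; and an $E$-valued sequence $(x_j)_{j=1}^\infty$ belongs to $\ell_p^{mid}(E)$ if and only if $\sup_k\|(x_j)_{j=1}^k\|_{mid,p}<\infty$, in which case $\|(x_j)_{j=1}^\infty\|_{mid,p}=\sup_k\|(x_j)_{j=1}^k\|_{mid,p}$.
   Context: Banach spaces are over $\mathbb{K}=\mathbb{R}$ or $\mathbb{C}$. $c_{00}(E)$ is the space of eventually null $E$-valued sequences; $(x_j)_{j=1}^k$ denotes the sequence $(x_1,\dots,x_k,0,0,\dots)$. $\ell_p^w(E)$: sequences with $\|(x_j)\|_{w,p}:=\sup_{x^*\in B_{E^*}}(\sum_j|x^*(x_j)|^p)^{1/p}<\infty$. $\ell_p^{mid}(E)$ consists of all $(x_j)\in\ell_p^w(E)$ with $\sum_n\sum_j|x_n^*(x_j)|^p<\infty$ for every $(x_n^* )\in\ell_p^w(E^* )$, with the norm $\|(x_j)\|_{mid,p}=\sup_{(x_n^* )\in B_{\ell_p^w(E^* )}}(\sum_n\sum_j|x_n^*(x_j)|^p)^{1/p}$ (for an arbitrary $E$-valued sequence this supremum may be $+\infty$). *)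

From HB Require Import structures.
From mathcomp Require Import all_boot all_order all_algebra.
From mathcomp Require Import all_classical all_reals all_analysis.
From mathcomp Require Import complex.
Set Implicit Arguments. Unset Strict Implicit. Unset Printing Implicit Defensive.
Import Order.TTheory GRing.Theory Num.Theory.
Import numFieldNormedType.Exports.
Local Open Scope classical_set_scope.
Local Open Scope ring_scope.

(* Scalar field K (= R or C), with nr : K -> R the absolute value as a real
   number (normr for K = R, Normc.normc for K = R[i]). *)
Section MidSpaces.
Variables (R : realType) (K : numFieldType) (nr : K -> R).

Definition is_lin (V : lmodType K) (f : V -> K) : Prop :=
  forall (a : K) (x y : V), f (a *: x + y) = a * f x + f y.

Definition psum (p : R) (u : nat -> R) : \bar R :=
  (\sum_(j <oo) ((u j) `^ p)%:E)%E.

Section OverE.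
Variable E : normedModType K.

Definition dual_space : set (E -> K) :=
  [set f | is_lin f /\ exists c : R, forall x, nr (f x) <= c * nr `|x|].

Definition dual_ball : set (E -> K) :=
  [set f | is_lin f /\ forall x, nr (f x) <= nr `|x|].

Definition dual_norm (f : E -> K) : \bar R :=
  ereal_sup [set (nr (f x))%:E | x in [set x : E | nr `|x| <= 1]].

Definition bidual_ball : set ((E -> K) -> K) :=
  [set phi | (forall (a : K) (f g : E -> K), dual_space f -> dual_space g ->
                 phi (fun x => a * f x + g x) = a * phi f + phi g) /\
             (forall f, dual_space f -> ((nr (phi f))%:E <= dual_norm f)%E)].

Definition weak_norm (p : R) (xs : nat -> E) : \bar R :=
  ereal_sup [set ((psum p (fun j => nr (f (xs j)))) `^ p^-1)%E | f in dual_ball].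

Definition weak_seq (p : R) (xs : nat -> E) : Prop := (weak_norm p xs < +oo)%E.

Definition weak_norm_dual (p : R) (fs : nat -> E -> K) : \bar R :=
  ereal_sup [set ((psum p (fun n => nr (phi (fs n)))) `^ p^-1)%E | phi in bidual_ball].

Definition weak_seq_dual (p : R) (fs : nat -> E -> K) : Prop :=
  (forall n, dual_space (fs n)) /\ (weak_norm_dual p fs < +oo)%E.

Definition mid_sum (p : R) (fs : nat -> E -> K) (xs : nat -> E) : \bar R :=
  (\sum_(n <oo) psum p (fun j => nr (fs n (xs j))))%E.

Definition mid_norm (p : R) (xs : nat -> E) : \bar R :=
  ereal_sup [set ((mid_sum p fs xs) `^ p^-1)%E |
     fs in [set fs | (forall n, dual_space (fs n)) /\ (weak_norm_dual p fs <= 1)%E]].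

Definition mid_seq (p : R) (xs : nat -> E) : Prop :=
  weak_seq p xs /\
  forall fs, weak_seq_dual p fs -> (mid_sum p fs xs < +oo)%E.

(* (x_j)_{j=1}^k = (x_1, ..., x_k, 0, 0, ...); indices shifted to start at 0 *)
Definition trunc (k : nat) (xs : nat -> E) : nat -> E :=
  fun j => if (j < k)%N then xs j else 0.

Definition c00 (xs : nat -> E) : Prop := exists N, forall j, (N <= j)%N -> xs j = 0.

End OverE.

Definition unit_seq (j : nat) : nat -> K := fun i => if i == j then 1 else 0.

Definition mid_finitely_determined (p : R) : Prop :=
  (forall E : completeNormedModType K,
     (forall xs : nat -> E, c00 xs -> mid_seq p xs) /\
     (forall xs : nat -> E, mid_seq p xs ->
        forall j, ((nr `|xs j|)%:E <= mid_norm p xs)%E) /\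
     (forall xs : nat -> E,
        mid_seq p xs <->
        (ereal_sup (range (fun k => mid_norm p (trunc k xs))) < +oo)%E) /\
     (forall xs : nat -> E, mid_seq p xs ->
        mid_norm p xs = ereal_sup (range (fun k => mid_norm p (trunc k xs))))) /\
  (forall j : nat, mid_norm (E := K) p (unit_seq j) = 1%E).

End MidSpaces.

(* First, |f_n(x)| is controlled by the weak p-norm of
   (f_n), tested on the evaluation functional at x/||x||; together with
   Hahn-Banach norming functionals f (over C obtained as u - i u(i .) from
   real ones), used as one-term families (f, 0, 0, ...), this gives the
   finiteness of the mid-norm on finitely supported sequences and
   ||x_j|| <= ||(x_j)||_{mid,p}.  Second, every double series
   sum_n sum_j |f_n(x_j)|^p of nonnegative terms is the increasing limit of its
   truncations in j, so the supremum over admissible (f_n) commutes with the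
   supremum over k.  Third, a finite mid-norm bounds every mid-sum after
   rescaling (f_n); conversely, if the mid-norm were infinite, admissible
   families with ever larger mid-sums could be glued with summable weights
   into one weakly p-summable family with a divergent mid-sum. *)

From HB Require Import structures.
From mathcomp Require Import all_boot all_order all_algebra.
From mathcomp Require Import all_classical all_reals all_analysis.
From mathcomp Require Import complex.
From mathcomp Require Import ring lra.
Set Implicit Arguments. Unset Strict Implicit. Unset Printing Implicit Defensive.
Import Order.TTheory GRing.Theory Num.Theory.
Import numFieldNormedType.Exports.
Local Open Scope classical_set_scope.
Local Open Scope ring_scope.

Section LinearFunctional.
Variables (K : numFieldType) (V : lmodType K) (f : V -> K).
Hypothesis fL : is_lin f.

Lemma is_lin0 : f 0 = 0.
Proof.
have := fL 1 0 0; rewrite scale1r mul1r addr0 => f00.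
by apply: (addrI (f 0)); rewrite -f00 addr0.
Qed.

Lemma is_linD x y : f (x + y) = f x + f y.
Proof. by rewrite -{1}[x]scale1r (fL 1 x y) mul1r. Qed.

Lemma is_linZ a x : f (a *: x) = a * f x.
Proof. by rewrite -[a *: x]addr0 (fL a x 0) is_lin0 addr0. Qed.

Lemma is_linN x : f (- x) = - f x.
Proof. by rewrite -scaleN1r is_linZ mulN1r. Qed.

End LinearFunctional.

Section SeriesFacts.
Variable R : realType.
Local Open Scope ereal_scope.

Lemma nneseries_ge_term (u : nat -> \bar R) j : (forall i, 0 <= u i) ->
  u j <= \sum_(i <oo) u i.
Proof.
move=> u0; apply: le_trans (nneseries_lim_ge j.+1 (fun i _ _ => u0 i)).
by rewrite big_nat_recr //= leeDr // sume_ge0.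
Qed.

Lemma eseries_finite_support (u : nat -> \bar R) N :
  (forall j, (N <= j)%N -> u j = 0) -> \sum_(j <oo) u j = \sum_(j < N) u j.
Proof.
move=> u0; apply: lim_near_cst => //; near=> n.
have Nn : (N <= n)%N by near: n; exists N.
rewrite (big_cat_nat (n := N)) //= [X in _ + X]big1_seq ?adde0 ?big_mkord //.
by move=> i /andP[_]; rewrite mem_index_iota => /andP[Ni _]; exact: u0.
Unshelve. all: by end_near. Qed.

Lemma eseries_single (u : nat -> \bar R) j : (forall i, i != j -> u i = 0) ->
  \sum_(i <oo) u i = u j.
Proof.
move=> u0; rewrite (@eseries_finite_support _ j.+1); last first.
  by move=> i ji; apply: u0; rewrite neq_ltn ltnNge ji orbT.
by rewrite big_ord_recr /= big1 ?add0e // => i _; apply: u0; rewrite neq_ltn ltn_ord.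
Qed.

Lemma nneseries1 : \sum_(n <oo) (1 : \bar R) = +oo.
Proof.
apply/cvg_lim => //; rewrite (_ : (fun n => _) = fun n => (n%:R)%:E).
  by apply/cvgenyP; exact: cvg_id.
by apply/funext => n; rewrite sumEFin sumr_const_nat subn0.
Qed.

Lemma nneseries_pair_bij (g : nat -> nat * nat) (b : nat -> nat -> \bar R) :
  set_bij setT setT g -> (forall m k, 0 <= b m k) ->
  \sum_(n <oo) b (g n).1 (g n).2 = \sum_(m <oo) \sum_(k <oo) b m k.
Proof.
move=> g_bij b0; rewrite nneseries_esumT //.
rewrite -(reindex_esum setT setT g (fun z => b z.1 z.2)) //.
have -> : [set: nat * nat] = [set: nat] `*`` (fun=> [set: nat]).
  by apply/seteqP; split => // z.
rewrite -(@esum_esum R _ _ setT (fun=> setT) b) // nneseries_esumT; last first.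
  by move=> m; apply: nneseries_ge0 => k _ _.
by apply: eq_esum => m _; rewrite nneseries_esumT.
Qed.

Lemma lty_ge0_bound (e : \bar R) : e < +oo -> exists2 W : R, (0 <= W)%R & e <= W%:E.
Proof.
case: e => [r _| //|_]; last by exists 0%R; rewrite ?leNye.
by exists (Num.max 0 r)%R; rewrite ?lee_fin le_max lexx ?orbT.
Qed.

End SeriesFacts.
Section PowerSums.
Variables (R : realType) (p : R).
Hypothesis p_gt0 : 0 < p.

Let p_neq0 : p != 0. Proof. by rewrite gt_eqF. Qed.

Lemma powRpV (r : R) : 0 <= r -> (r `^ p) `^ p^-1 = r.
Proof. by move=> r0; rewrite -powRrM mulfV // powRr1. Qed.

Lemma powRVp (r : R) : 0 <= r -> (r `^ p^-1) `^ p = r.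
Proof. by move=> r0; rewrite -powRrM mulVf // powRr1. Qed.

Local Open Scope ereal_scope.

Lemma poweRV_le (e : \bar R) (s : R) : 0 <= e -> (0 <= s)%R ->
  (e `^ p^-1 <= s%:E) = (e <= (s `^ p)%:E).
Proof.
case: e => [r| |] // r0 s0; last by rewrite /= invr_eq0 (negPf p_neq0) !leye_eq.
rewrite poweR_EFin !lee_fin; apply/idP/idP => h.
  rewrite -(powRVp r0); apply: ge0_ler_powR; rewrite ?nnegrE ?powR_ge0 //.
  exact: ltW.
rewrite -(powRpV s0); apply: ge0_ler_powR; rewrite ?nnegrE ?powR_ge0 //.
by rewrite invr_ge0 ltW.
Qed.

Lemma poweRV_lty (e : \bar R) : (e `^ p^-1 < +oo) = (e < +oo).
Proof.
apply/idP/idP; last exact: poweR_lty.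
by apply: lty_poweRy; rewrite invr_eq0.
Qed.

Lemma lee_poweRV (e1 e2 : \bar R) : 0 <= e1 -> e1 <= e2 ->
  e1 `^ p^-1 <= e2 `^ p^-1.
Proof.
move=> e1_ge0 e12; apply: gt0_ler_poweR; rewrite ?invr_ge0 ?(ltW p_gt0) //.
  by rewrite in_itv /= e1_ge0 leey.
by rewrite in_itv /= (le_trans e1_ge0 e12) leey.
Qed.

Lemma eq_psum (u v : nat -> R) : u =1 v -> psum p u = psum p v.
Proof. by move=> /boolp.funext ->. Qed.

Lemma psum_ge0 (u : nat -> R) : 0 <= psum p u.
Proof. by apply: nneseries_ge0 => n _ _; rewrite lee_fin powR_ge0. Qed.

Lemma psum0 : psum p (fun=> 0%R) = 0.
Proof. by apply: eseries0 => n _ _; rewrite powR0. Qed.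

Lemma psumZ (a : R) (u : nat -> R) : (0 <= a)%R -> (forall n, 0 <= u n)%R ->
  psum p (fun n => a * u n)%R = (a `^ p)%:E * psum p u.
Proof.
move=> a0 u0; rewrite /psum -nneseriesZl => [|n _]; last by rewrite lee_fin powR_ge0.
by apply: eq_eseriesr => n _; rewrite powRM // EFinM.
Qed.

End PowerSums.

Section RealHahnBanach.
Variables (R : realType) (V : lmodType R) (q : V -> R).
Hypothesis qD : forall x y, q (x + y) <= q x + q y.
Hypothesis qZ : forall (a : R) x, q (a *: x) = `|a| * q x.

Lemma seminorm0 : q 0 = 0.
Proof. by rewrite -(scale0r (0 : V)) qZ normr0 mul0r. Qed.

Lemma seminormN x : q (- x) = q x.
Proof. by rewrite -scaleN1r qZ normrN normr1 mul1r. Qed.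

Lemma seminorm_ge0 x : 0 <= q x.
Proof.
have := qD x (- x); rewrite subrr seminorm0 seminormN => h.
by rewrite -(pmulrn_lge0 _ (ltn0Sn 1)) mulr2n.
Qed.

Definition linear_graph (A : set (V * R)) :=
  forall a u r w s, A (u, r) -> A (w, s) -> A (a *: u + w, a * r + s).

Definition functional_graph (A : set (V * R)) :=
  forall u r s, A (u, r) -> A (u, s) -> r = s.

Definition dominated_graph (A : set (V * R)) :=
  [/\ linear_graph A, functional_graph A & forall u r, A (u, r) -> r <= q u].

Lemma linear_graph0 A u r : linear_graph A -> A (u, r) -> A (0, 0).
Proof.
move=> lA Aur; have := lA (-1) _ _ _ _ Aur Aur.
by rewrite scaleN1r addNr mulN1r addNr.
Qed.

Section OneStepExtension.
Variables (A : set (V * R)) (v : V).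
Hypothesis domA : dominated_graph A.
Hypothesis A00 : A (0, 0).

(* Since r + s <= q (u + w) <= q (u - v) + q (w + v) for (u, r), (w, s) in A,
   a value c for the new direction v can be squeezed in between. *)
Lemma dominated_graph_gap : exists c : R,
  (forall u r, A (u, r) -> r - q (u - v) <= c) /\
  (forall w s, A (w, s) -> c <= q (w + v) - s).
Proof.
case: domA => lA _ dA.
have key u r w s : A (u, r) -> A (w, s) -> r - q (u - v) <= q (w + v) - s.
  move=> Aur Aws; have := dA _ _ (lA 1 _ _ _ _ Aur Aws).
  rewrite scale1r mul1r; have := qD (u - v) (w + v).
  rewrite addrACA addNr addr0; lra.
pose S := [set y | exists u r, A (u, r) /\ y = r - q (u - v)].
have S0 : S !=set0 by exists (0 - q (0 - v)), 0, 0.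
have Sub : has_ubound S by exists (q (0 + v) - 0) => y [u [r [Aur ->]]]; exact: key.
exists (sup S); split => [u r Aur|w s Aws].
  by apply: ub_le_sup => //; exists u, r.
by apply: ge_sup => // y [u [r [Aur ->]]]; exact: key.
Qed.

Variable c : R.

Definition graph_extension : set (V * R) :=
  [set z | exists u r t, A (u, r) /\ z = (u + t *: v, r + t * c)].

Lemma graph_extension_sub : A `<=` graph_extension.
Proof. by move=> [u r] Aur; exists u, r, 0; rewrite scale0r mul0r !addr0. Qed.

Lemma graph_extension_linear : linear_graph graph_extension.
Proof.
case: domA => lA _ _ a _ _ _ _ [u [r [t [Aur [-> ->]]]]] [w [s [t' [Aws [-> ->]]]]].
exists (a *: u + w), (a * r + s), (a * t + t'); split; first exact: lA.
by congr pair; [rewrite scalerDr scalerA scalerDl addrACA | ring].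
Qed.

Lemma graph_extension_functional : (forall r, ~ A (v, r)) ->
  functional_graph graph_extension.
Proof.
case: domA => lA fA _ vA _ r1 r2 [u [r [t [Aur [-> ->]]]]] [w [s [t' [Aws []]]]].
have [<- e|tt' e _] := eqVneq t t'.
  by move/addIr: e => ew; rewrite -ew in Aws => ->; rewrite (fA _ _ _ Aur Aws).
have ev : v = (t - t')^-1 *: ((-1) *: u + w) + 0.
  rewrite addr0 scaleN1r -[w](addrK (t' *: v)) -e -addrA -scalerBl.
  by rewrite addKr scalerA mulVf ?scale1r // subr_eq0.
exfalso; apply: (vA ((t - t')^-1 * (-1 * r + s) + 0)); rewrite ev.
exact: lA (lA _ _ _ _ _ Aur Aws) (linear_graph0 lA Aur).
Qed.

Hypothesis c_lb : forall u r, A (u, r) -> r - q (u - v) <= c.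
Hypothesis c_ub : forall w s, A (w, s) -> c <= q (w + v) - s.

Lemma graph_extension_dominated u r : graph_extension (u, r) -> r <= q u.
Proof.
case: domA => lA _ dA [w [s [t [Aws [-> ->]]]]].
have Ascaled a : A (a *: w, a * s) by rewrite -[_ *: w]addr0 -[a * s]addr0; exact: lA.
have [t0|t0|->] := ltgtP t 0; last by rewrite scale0r mul0r !addr0; exact: dA.
- have tpos : 0 < - t by rewrite oppr_gt0.
  have := c_lb (Ascaled (- t)^-1).
  have -> : w + t *: v = - t *: ((- t)^-1 *: w - v).
    by rewrite scalerBr scalerA mulfV ?oppr_eq0 ?lt_eqF // scale1r scaleNr opprK.
  rewrite qZ gtr0_norm // => h.
  have := ler_wpM2l (ltW tpos) h.
  rewrite mulrBr mulrA mulfV ?oppr_eq0 ?lt_eqF // mul1r; lra.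
- have := c_ub (Ascaled t^-1).
  have -> : w + t *: v = t *: (t^-1 *: w + v).
    by rewrite scalerDr scalerA mulfV ?gt_eqF // scale1r.
  rewrite qZ gtr0_norm // => h.
  have := ler_wpM2l (ltW t0) h.
  rewrite mulrBr mulrA mulfV ?gt_eqF // mul1r; lra.
Qed.

End OneStepExtension.

Lemma dominated_graph_extend A v : dominated_graph A -> A (0, 0) ->
  (forall r, ~ A (v, r)) -> exists2 B, A `<` B & dominated_graph B.
Proof.
move=> domA A00 vA; have [c [c_lb c_ub]] := dominated_graph_gap v domA A00.
exists (graph_extension A v c).
  split; first exact: graph_extension_sub.
  move=> /(_ (v, c)) BA; apply: (vA c); apply: BA.
  by exists 0, 0, 1; rewrite scale1r mul1r !add0r.
split; [exact: graph_extension_linear | exact: graph_extension_functional |].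
exact: graph_extension_dominated.
Qed.

Variable x0 : V.

Definition line_graph : set (V * R) := [set z | exists t, z = (t *: x0, t * q x0)].

Lemma line_graph_dominated : dominated_graph line_graph.
Proof.
split.
- move=> a _ _ _ _ [t [-> ->]] [t' [-> ->]]; exists (a * t + t').
  by rewrite scalerDl scalerA mulrDl mulrA.
- move=> _ _ _ [t [-> ->]] [t' [e ->]].
  have [->|x0N0] := eqVneq x0 0; first by rewrite seminorm0 !mulr0.
  have /eqP : (t - t') *: x0 = 0 by rewrite scalerBl e subrr.
  by rewrite scaler_eq0 (negPf x0N0) orbF subr_eq0 => /eqP ->.
- move=> _ _ [t [-> ->]]; rewrite qZ ler_wpM2r ?ler_norm //; exact: seminorm_ge0.
Qed.

(* [set0] is allowed so that the union of the empty chain is admissible. *)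
Let admissible (A : set (V * R)) :=
  A = set0 \/ dominated_graph A /\ A (x0, q x0).

Lemma admissible_bigcup (F : set (set (V * R))) : F `<=` admissible ->
  total_on F subset -> admissible (\bigcup_(X in F) X).
Proof.
move=> Fadm Ftot.
have [[X0 [FX0 [z X0z]]]|Fempty] :=
  pselect (exists X, F X /\ X !=set0); last first.
  left; apply/seteqP; split => // z [X FX Xz].
  by apply: Fempty; exists X; split => //; exists z.
have domF X : F X -> X !=set0 -> dominated_graph X /\ X (x0, q x0).
  by move=> FX [y Xy]; case: (Fadm X FX) => // X0'; move: Xy; rewrite X0'.
have common z1 z2 : (\bigcup_(X in F) X) z1 -> (\bigcup_(X in F) X) z2 ->
    exists Y, [/\ F Y, dominated_graph Y, Y z1 & Y z2].
  move=> [X1 FX1 X1z] [X2 FX2 X2z].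
  have [sub|sub] := Ftot _ _ FX1 FX2.
  - exists X2; split => //; last exact: sub.
    by case: (domF X2 FX2 (ex_intro _ z2 X2z)).
  - exists X1; split => //; last exact: sub.
    by case: (domF X1 FX1 (ex_intro _ z1 X1z)).
right; split; last by exists X0 => //; case: (domF X0 FX0 (ex_intro _ z X0z)).
split.
- move=> a u r w s h1 h2; have [Y [FY [lY _ _] Y1 Y2]] := common _ _ h1 h2.
  by exists Y => //; exact: lY.
- move=> u r s h1 h2; have [Y [_ [_ fY _] Y1 Y2]] := common _ _ h1 h2.
  exact: fY Y1 Y2.
- by move=> u r h; have [Y [_ [_ _ dY] Y1 _]] := common _ _ h h; exact: dY.
Qed.

Theorem hahn_banach_seminorm : exists u : V -> R,
  [/\ is_lin u, forall x, u x <= q x & u x0 = q x0].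
Proof.
have [A [admA Amax]] := Zorn_bigcup admissible_bigcup.
have [domA Ax0] : dominated_graph A /\ A (x0, q x0).
  case: admA => // A0; exfalso; apply: (Amax line_graph).
    rewrite A0; split => // /(_ (0, 0)) L0; apply: L0.
    by exists 0; rewrite scale0r mul0r.
  by right; split; [exact: line_graph_dominated | exists 1; rewrite scale1r mul1r].
have [lA fA dA] := domA.
have total x : exists r, A (x, r).
  apply: contrapT => xA.
  have xA' r : ~ A (x, r) by move=> Axr; apply: xA; exists r.
  have [B AB domB] := dominated_graph_extend domA (linear_graph0 lA Ax0) xA'.
  by apply: (Amax B AB); right; split => //; case: AB => + _; apply.
pose u x := xget 0 (fun r => A (x, r)).
have Au x : A (x, u x) by exact: (xgetPex 0 (total x)).
exists u; split => [a x y|x|]; last exact: fA (Au x0) Ax0.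
- exact: fA (Au _) (lA _ _ _ _ _ (Au x) (Au y)).
- exact: dA.
Qed.

End RealHahnBanach.

Lemma real_norming_functional (R : realType) (E : normedModType R) (x : E) :
  exists f : E -> R, dual_ball Num.norm f /\ `|f x| = `| `|x| |.
Proof.
have [u [uL ub ux]] := hahn_banach_seminorm (@ler_normD _ E) (@normrZ _ E) x.
exists u; split; last by rewrite ux normr_id.
split => [|y]; first exact: uL.
by rewrite normr_id ler_norml ub andbT lerNl -(is_linN uL) -normrN.
Qed.

Section ComplexHahnBanach.
Variables (R : realType) (E : normedModType R[i]).
Local Open Scope complex_scope.

Definition realified : Type := E.
HB.instance Definition _ := GRing.Zmodule.on realified.

Definition real_scale (r : R) (x : realified) : realified := r%:C *: (x : E).

Lemma real_scaleA a b x : real_scale a (real_scale b x) = real_scale (a * b) x.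
Proof. by rewrite /real_scale scalerA rmorphM. Qed.

Lemma real_scale1 : left_id 1 real_scale.
Proof. by move=> x; rewrite /real_scale rmorph1 scale1r. Qed.

Lemma real_scaleDr : right_distributive real_scale +%R.
Proof. by move=> a x y; rewrite /real_scale scalerDr. Qed.

Lemma real_scaleDl x : {morph real_scale^~ x : a b / a + b}.
Proof. by move=> a b; rewrite /real_scale rmorphD scalerDl. Qed.

HB.instance Definition _ := GRing.Zmodule_isLmodule.Build R realified
  real_scaleA real_scale1 real_scaleDr real_scaleDl.

(* The norm of a normed R[i]-module is R[i]-valued, with zero imaginary part. *)
Definition normRe (x : E) : R := complex.Re `|x|.

Lemma normReE (x : E) : `|x| = (normRe x)%:C.
Proof.
by rewrite /normRe; have := ger0_Im (normr_ge0 x); case: `|x| => a b /= ->.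
Qed.

Lemma normRe_ge0 (x : E) : 0 <= normRe x.
Proof. by rewrite -ler0c -normReE. Qed.

Lemma normc_normRe (x : E) : Normc.normc `|x| = normRe x.
Proof.
by rewrite normReE /= expr0n /= addr0 sqrtr_sqr ger0_norm // normRe_ge0.
Qed.

Lemma normc_real (r : R) : Normc.normc r%:C = `|r|.
Proof. by rewrite /= expr0n /= addr0 sqrtr_sqr. Qed.

Lemma normReD (x y : realified) : normRe (x + y) <= normRe x + normRe y.
Proof.
by have := ler_normD (x : E) y; rewrite !normReE -rmorphD lecR.
Qed.

Lemma normReZ (a : R) (x : realified) : normRe (a *: x) = `|a| * normRe x.
Proof.
apply: complexI; rewrite rmorphM -normReE -normc_real.
by rewrite [a *: x]/(real_scale a x) /real_scale normrZ normReE.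
Qed.

Lemma normc_rotation (z : R[i]) :
  exists2 l : R[i], `|l| = 1 & complex.Re (l * z) = Normc.normc z.
Proof.
have [->|z0] := eqVneq z 0; first by exists 1; rewrite ?normr1 // mulr0 Normc.normc0.
case: z z0 => a b z0 /=; set s := Num.sqrt _.
have s2 : s ^+ 2 = a ^+ 2 + b ^+ 2 by rewrite sqr_sqrtr // addr_ge0 ?sqr_ge0.
have s0 : s != 0.
  by apply: contra z0 => /eqP s0; apply/eqP/Normc.eq0_normc; rewrite /= -/s s0.
exists ((a / s) +i* (- b / s)).
  rewrite normc_def /=; congr (_%:C).
  suff -> : (a / s) ^+ 2 + (- b / s) ^+ 2 = 1 by rewrite sqrtr1.
  by rewrite !expr_div_n sqrrN -mulrDl -s2 divff // expf_neq0.
transitivity ((a ^+ 2 + b ^+ 2) / s); first by rewrite /=; field.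
by rewrite -s2 expr2 mulfK.
Qed.

Lemma Re_le_normc (z : R[i]) : complex.Re z <= Normc.normc z.
Proof.
case: z => a b /=; apply: le_trans (ler_norm a) _.
by rewrite -sqrtr_sqr ler_sqrt ?lerDl ?sqr_ge0 // addr_ge0 ?sqr_ge0.
Qed.

Lemma scale_complexE (a b : R) (x : E) :
  (a +i* b) *: x = a%:C *: x + b%:C *: ('i *: x).
Proof.
rewrite scalerA -scalerDl; congr (_ *: _).
by apply/eqP; rewrite eq_complex /=; simpc.
Qed.

Lemma complex_norming_functional (x0 : E) :
  exists f : E -> R[i],
    dual_ball (@Normc.normc R) f /\ Normc.normc (f x0) = Normc.normc `|x0|.
Proof.
have [u [uL ub ux0]] := hahn_banach_seminorm normReD normReZ (x0 : realified).
have uD (x y : E) : u (x + y) = u x + u y := is_linD uL x y.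
have uZ r x : u (r%:C *: x) = r * u x := is_linZ uL r x.
pose f (x : E) : R[i] := u x +i* - u ('i *: x).
have fZ (l : R[i]) (x : E) : f (l *: x) = l * f x.
  case: l => a b; have ei : 'i *: ((a +i* b) *: x) = (- b) +i* a *: x.
    by rewrite scalerA; congr (_ *: _); apply/eqP; rewrite eq_complex /=; simpc.
  rewrite /f ei (scale_complexE a b) (scale_complexE (- b) a) !uD !uZ.
  by apply/eqP; rewrite eq_complex /=; apply/andP; split; apply/eqP; ring.
have fL : is_lin f.
  move=> l x y; rewrite -fZ /f scalerDr !uD; apply/eqP.
  by rewrite eq_complex /= opprD !eqxx.
have fb (x : E) : Normc.normc (f x) <= normRe x.
  have [l l1 lfx] := normc_rotation (f x).
  rewrite -lfx -fZ /= (le_trans (ub _)) //.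
  by rewrite /normRe normrZ l1 mul1r.
exists f; split.
  by split => // x; rewrite normc_normRe fb.
by apply/le_anti; rewrite normc_normRe fb /= -ux0 (Re_le_normc (f x0)).
Qed.

End ComplexHahnBanach.

Section MidNorm.
Variables (R : realType) (K : numFieldType) (nr : K -> R).
Hypothesis nrM : forall a b, nr (a * b) = nr a * nr b.
Hypothesis nr0 : nr 0 = 0.
Hypothesis nr1 : nr 1 = 1.
Hypothesis nr_ge0 : forall a, 0 <= nr a.
Hypothesis nr_surj : forall t : R, 0 <= t -> exists c : K, nr c = t.
Variable p : R.
Hypothesis p_ge1 : 1 <= p.

Let p_gt0 : 0 < p. Proof. exact: lt_le_trans p_ge1. Qed.

Section DualSpaces.
Variable E : normedModType K.

Lemma dual_ball_space (f : E -> K) : dual_ball nr f -> dual_space nr f.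
Proof. by move=> [fL fb]; split => //; exists 1 => x; rewrite mul1r. Qed.

Lemma dual_norm_le1 (f : E -> K) : dual_ball nr f -> (dual_norm nr f <= 1)%E.
Proof.
move=> [_ fb]; apply: ge_ereal_sup => _ [x /= x1 <-].
by rewrite lee_fin (le_trans (fb x)).
Qed.

Lemma dual_space_zero : dual_space nr (fun _ : E => 0).
Proof.
by split => [a x y|]; [rewrite mulr0 addr0 | exists 0 => x; rewrite nr0 mul0r].
Qed.

Lemma dual_spaceZ (c : K) (f : E -> K) :
  dual_space nr f -> dual_space nr (fun x => c * f x).
Proof.
move=> [fL [C fC]]; split => [a x y|]; first by rewrite fL mulrDr mulrCA.
by exists (nr c * C) => x; rewrite nrM -mulrA ler_wpM2l.
Qed.

Lemma bidual_ball0 (phi : (E -> K) -> K) : bidual_ball nr phi -> phi (fun=> 0) = 0.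
Proof.
move=> [phiL _]; have := phiL 1 _ _ dual_space_zero dual_space_zero.
have -> : (fun x : E => 1 * 0 + 0 : K) = fun=> 0.
  by apply: boolp.funext => x; rewrite mulr0 addr0.
by rewrite mul1r => e; apply: (addrI (phi (fun=> 0))); rewrite -e addr0.
Qed.

Lemma bidual_ballZ (phi : (E -> K) -> K) (c : K) (f : E -> K) :
  bidual_ball nr phi -> dual_space nr f -> phi (fun x => c * f x) = c * phi f.
Proof.
move=> phiB fD; have := phiB.1 c _ _ fD dual_space_zero.
have -> : (fun x => c * f x + 0) = fun x => c * f x.
  by apply: boolp.funext => x; rewrite addr0.
by rewrite bidual_ball0 // addr0.
Qed.

Lemma bidual_ball_eval (x : E) : nr `|x| <= 1 -> bidual_ball nr (fun f => f x).
Proof. by move=> x1; split => // f _; apply: ereal_sup_ubound; exists x. Qed.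

Lemma weak_norm_dual_leP (fs : nat -> E -> K) (W : R) : 0 <= W ->
  (weak_norm_dual nr p fs <= W%:E)%E <->
  (forall phi, bidual_ball nr phi ->
     psum p (fun n => nr (phi (fs n))) <= (W `^ p)%:E)%E.
Proof.
move=> W0; split => [fsW phi phiB|fsW].
  rewrite -poweRV_le ?psum_ge0 //; apply: le_trans fsW.
  by apply: ereal_sup_ubound; exists phi.
by apply: ge_ereal_sup => _ [phi phiB <-]; rewrite poweRV_le ?psum_ge0 // fsW.
Qed.

Lemma weak_norm_dualZ (fs : nat -> E -> K) (c : K) (W : R) :
  (forall n, dual_space nr (fs n)) -> 0 <= W -> (weak_norm_dual nr p fs <= W%:E)%E ->
  (weak_norm_dual nr p (fun n x => (c * fs n x)%R) <= (nr c * W)%R%:E)%E.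
Proof.
move=> fsD W0 /(weak_norm_dual_leP _ W0) fsW.
apply/weak_norm_dual_leP => [|phi phiB]; first exact: mulr_ge0.
rewrite (@eq_psum _ _ _ (fun n => nr c * nr (phi (fs n)))) => [|n].
  by rewrite psumZ // powRM // EFinM lee_wpmul2l ?lee_fin ?powR_ge0 ?fsW.
by rewrite bidual_ballZ // nrM.
Qed.

Lemma psum_eval_le (fs : nat -> E -> K) (W : R) (x : E) :
  (forall n, dual_space nr (fs n)) -> 0 <= W -> (weak_norm_dual nr p fs <= W%:E)%E ->
  (psum p (fun n => nr (fs n x)) <= ((W * nr `|x|) `^ p)%R%:E)%E.
Proof.
move=> fsD W0 /(weak_norm_dual_leP _ W0) fsW.
have [->|x0] := eqVneq x 0.
  rewrite (@eq_psum _ _ _ (fun=> 0)) ?psum0 ?lee_fin ?powR_ge0 // => n.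
  by rewrite is_lin0 ?nr0 //; case: (fsD n).
pose y := `|x|^-1 *: x.
have y1 : nr `|y| <= 1 by rewrite normrZ normfV normr_id mulVf ?normr_eq0 // nr1.
have xE : x = `|x| *: y by rewrite scalerA mulfV ?normr_eq0 // scale1r.
rewrite (@eq_psum _ _ _ (fun n => nr `|x| * nr (fs n y))) => [|n]; last first.
  by rewrite {1}xE is_linZ ?nrM //; case: (fsD n).
rewrite psumZ // mulrC powRM // EFinM lee_wpmul2l ?lee_fin ?powR_ge0 //.
exact: fsW (bidual_ball_eval y1).
Qed.

Definition mid_admissible (fs : nat -> E -> K) :=
  (forall n, dual_space nr (fs n)) /\ (weak_norm_dual nr p fs <= 1)%E.

Lemma mid_sum_ge0 (fs : nat -> E -> K) (xs : nat -> E) : (0 <= mid_sum nr p fs xs)%E.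
Proof. by apply: nneseries_ge0 => n _ _; exact: psum_ge0. Qed.

Lemma mid_sum_le_mid_norm (fs : nat -> E -> K) (xs : nat -> E) :
  mid_admissible fs -> (mid_sum nr p fs xs `^ p^-1 <= mid_norm nr p xs)%E.
Proof. by move=> fs_adm; apply: ereal_sup_ubound; exists fs. Qed.

Lemma mid_sumZ (c : K) (fs : nat -> E -> K) (xs : nat -> E) :
  mid_sum nr p (fun n x => c * fs n x) xs = ((nr c `^ p)%:E * mid_sum nr p fs xs)%E.
Proof.
rewrite /mid_sum -nneseriesZl => [|n _]; last exact: psum_ge0.
apply: eq_eseriesr => n _; rewrite -psumZ //; apply: eq_psum => j; exact: nrM.
Qed.

Definition single_family (f : E -> K) : nat -> E -> K :=
  fun n => if n == 0%N then f else fun=> 0.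

Lemma single_family_admissible (f : E -> K) :
  dual_ball nr f -> mid_admissible (single_family f).
Proof.
move=> fB; have singleD n : dual_space nr (single_family f n).
  rewrite /single_family; case: ifP => _; first exact: dual_ball_space.
  exact: dual_space_zero.
split => //; apply/(weak_norm_dual_leP _ ler01) => phi phiB.
rewrite /psum (eseries_single (j := 0)) => [|n n0]; last first.
  by rewrite /single_family (negPf n0) bidual_ball0 // nr0 powR0 ?gt_eqF.
rewrite lee_fin; apply: ge0_ler_powR; rewrite ?nnegrE ?(ltW p_gt0) //.
rewrite -lee_fin; apply: le_trans (phiB.2 f (dual_ball_space fB)) _.
exact: dual_norm_le1.
Qed.

Lemma mid_sum_single_family (f : E -> K) (xs : nat -> E) :
  mid_sum nr p (single_family f) xs = psum p (fun j => nr (f (xs j))).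
Proof.
rewrite /mid_sum (eseries_single (j := 0)) // => n n0.
by rewrite /single_family (negPf n0) -(psum0 p_gt0); apply: eq_psum => j.
Qed.

Lemma weak_norm_le_mid_norm (xs : nat -> E) : (weak_norm nr p xs <= mid_norm nr p xs)%E.
Proof.
apply: ge_ereal_sup => _ [f fB <-]; rewrite -mid_sum_single_family.
exact/mid_sum_le_mid_norm/single_family_admissible.
Qed.

Lemma norming_le_mid_norm (xs : nat -> E) j (f : E -> K) : dual_ball nr f ->
  nr (f (xs j)) = nr `|xs j| -> ((nr `|xs j|)%:E <= mid_norm nr p xs)%E.
Proof.
move=> fB fxj; apply: le_trans (weak_norm_le_mid_norm xs).
apply: (@le_trans _ _ (psum p (fun i => nr (f (xs i))) `^ p^-1)%E); last first.
  by apply: ereal_sup_ubound; exists f.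
rewrite -(powRpV p_gt0 (nr_ge0 `|xs j|)) -poweR_EFin -fxj.
apply: (lee_poweRV p_gt0); first by rewrite lee_fin powR_ge0.
apply: (nneseries_ge_term (u := fun i => (nr (f (xs i)) `^ p)%:E)) => i.
by rewrite lee_fin powR_ge0.
Qed.

Lemma mid_sum_trunc (fs : nat -> E -> K) (xs : nat -> E) k :
  (forall n, dual_space nr (fs n)) ->
  mid_sum nr p fs (trunc k xs) =
  (\sum_(0 <= j < k) psum p (fun n => nr (fs n (xs j))))%E.
Proof.
move=> fsD; rewrite -nneseries_sum_nat => [|j n]; last by rewrite lee_fin powR_ge0.
apply: eq_eseriesr => n _; rewrite /psum (@eseries_finite_support _ _ k) => [|j kj].
  by rewrite big_mkord; apply: eq_bigr => j _; rewrite /trunc ltn_ord.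
by rewrite /trunc ltnNge kj /= is_lin0 ?nr0 ?powR0 ?gt_eqF //; case: (fsD n).
Qed.

Lemma mid_sum_trunc_sup (fs : nat -> E -> K) (xs : nat -> E) :
  (forall n, dual_space nr (fs n)) ->
  mid_sum nr p fs xs = ereal_sup (range (fun k => mid_sum nr p fs (trunc k xs))).
Proof.
move=> fsD; under eq_fun do rewrite mid_sum_trunc //.
have a_ge0 n j : (0 <= ((nr (fs n (xs j))) `^ p)%:E)%E by rewrite lee_fin powR_ge0.
rewrite /mid_sum /psum (nneseries_interchange xpredT xpredT a_ge0).
apply/cvg_lim => //; apply: ereal_nondecreasing_cvgn.
by apply: ereal_nondecreasing_series => j _ _; exact: psum_ge0.
Qed.

Lemma mid_norm_trunc_sup (xs : nat -> E) :
  mid_norm nr p xs = ereal_sup (range (fun k => mid_norm nr p (trunc k xs))).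
Proof.
apply/le_anti/andP; split; last first.
  apply: ge_ereal_sup => _ [k _ <-]; apply: ge_ereal_sup => _ [fs fs_adm <-].
  apply: le_trans (mid_sum_le_mid_norm xs fs_adm).
  apply: (lee_poweRV p_gt0); first exact: mid_sum_ge0.
  by rewrite (mid_sum_trunc_sup xs fs_adm.1); apply: ereal_sup_ubound; exists k.
apply: ge_ereal_sup => _ [fs fs_adm <-].
set S := ereal_sup _.
have S_ge k : (mid_sum nr p fs (trunc k xs) `^ p^-1 <= S)%E.
  apply: le_trans (mid_sum_le_mid_norm _ fs_adm) _.
  by apply: ereal_sup_ubound; exists k.
have S_ge0 : (0 <= S)%E by apply: le_trans (S_ge 0%N); exact: poweR_ge0.
case: S S_ge S_ge0 => [s| |] // S_ge s_ge0; last by rewrite leey.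
rewrite (poweRV_le p_gt0) ?mid_sum_ge0 //.
rewrite (mid_sum_trunc_sup xs fs_adm.1).
apply: ge_ereal_sup => _ [k _ <-]; rewrite -(poweRV_le p_gt0) ?mid_sum_ge0 //.
Qed.

Lemma mid_norm_lty_finite_support (xs : nat -> E) N :
  (forall j, (N <= j)%N -> xs j = 0) -> (mid_norm nr p xs < +oo)%E.
Proof.
move=> xs0; have -> : xs = trunc N xs.
  by apply: boolp.funext => j; rewrite /trunc; case: ltnP => // /xs0.
pose S := \sum_(0 <= j < N) nr `|xs j| `^ p.
apply: (@le_lt_trans _ _ (S%:E `^ p^-1)%E); last by rewrite poweR_lty ?ltry.
apply: ge_ereal_sup => _ [fs [fsD fsW] <-].
apply: (lee_poweRV p_gt0); first exact: mid_sum_ge0.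
rewrite mid_sum_trunc // /S -sumEFin; apply: lee_sum => j _.
by have := psum_eval_le (xs j) fsD ler01 fsW; rewrite mul1r.
Qed.

Lemma mid_seq_of_mid_norm_lty (xs : nat -> E) :
  (mid_norm nr p xs < +oo)%E -> mid_seq nr p xs.
Proof.
move=> xs_fin; split; first exact: le_lt_trans (weak_norm_le_mid_norm xs) xs_fin.
move=> fs [fsD /lty_ge0_bound [W W0 fsW]].
have [c c_nr] : exists c, nr c = (W + 1)^-1.
  by apply: nr_surj; rewrite invr_ge0 addr_ge0.
have W1_gt0 : 0 < W + 1 by rewrite ltr_wpDl.
have cfs_adm : mid_admissible (fun n x => c * fs n x).
  split => [n|]; first exact: dual_spaceZ.
  apply: le_trans (weak_norm_dualZ c fsD W0 fsW) _.
  by rewrite lee_fin c_nr mulrC ler_pdivrMr // mul1r lerDl.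
have := le_lt_trans (mid_sum_le_mid_norm xs cfs_adm) xs_fin.
rewrite (poweRV_lty p_gt0) mid_sumZ.
have cp_gt0 : 0 < nr c `^ p by rewrite powR_gt0 // c_nr invr_gt0.
case: (mid_sum nr p fs xs) => [r _|/=|//]; first exact: ltry.
by rewrite mulry gtr0_sg // mul1e ltxx.
Qed.

Lemma c00_mid_seq (xs : nat -> E) : c00 xs -> mid_seq nr p xs.
Proof.
move=> [N xs0]; apply: mid_seq_of_mid_norm_lty.
exact: mid_norm_lty_finite_support xs0.
Qed.

Lemma mid_sum_gt_of_mid_norm_pinfty (xs : nat -> E) : mid_norm nr p xs = +oo%E ->
  forall M : R, exists fs, mid_admissible fs /\ (M%:E < mid_sum nr p fs xs)%E.
Proof.
move=> xs_oo M; pose M' := Num.max 0 M.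
have M'_ge0 : 0 <= M' by rewrite le_max lexx.
have : ((M' `^ p^-1)%:E < mid_norm nr p xs)%E by rewrite xs_oo ltry.
move=> /ereal_sup_gt[_ [fs fs_adm <-] M'_lt]; exists fs; split => //.
apply: (@le_lt_trans _ _ M'%:E); first by rewrite lee_fin le_max lexx orbT.
rewrite ltNge; apply: contraTN M'_lt => fs_le; rewrite -leNgt.
by rewrite (poweRV_le p_gt0) ?mid_sum_ge0 ?powR_ge0 // powRVp.
Qed.

Section Gluing.
Variables (F : nat -> nat -> E -> K) (c : nat -> K) (g : nat -> nat * nat).
Hypothesis g_bij : set_bij setT setT g.

Let glued : nat -> E -> K := fun n x => c (g n).1 * F (g n).1 (g n).2 x.

Lemma glued_admissible : (forall m, mid_admissible (F m)) ->
  (\sum_(m <oo) (nr (c m) `^ p)%:E <= 1)%E -> mid_admissible glued.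
Proof.
move=> F_adm c_sum; have FD m k : dual_space nr (F m k) by case: (F_adm m).
split => [n|]; first exact: dual_spaceZ.
apply/(weak_norm_dual_leP _ ler01) => phi phiB; rewrite powR1.
pose b m k := (((nr (c m) * nr (phi (F m k))) `^ p)%:E : \bar R).
have -> : psum p (fun n => nr (phi (glued n))) = (\sum_(n <oo) b (g n).1 (g n).2)%E.
  by apply: eq_eseriesr => n _; rewrite /glued bidual_ballZ // nrM.
rewrite nneseries_pair_bij // => [|m k]; last by rewrite lee_fin powR_ge0.
apply: le_trans c_sum; apply: lee_nneseries => [m _ _|m _].
  by apply: nneseries_ge0 => k _ _; rewrite lee_fin powR_ge0.
rewrite -[X in (_ <= X)%E]mule1 -/(psum p _) psumZ //.
apply: lee_wpmul2l; first by rewrite lee_fin powR_ge0.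
by have := (weak_norm_dual_leP (F m) ler01).1 (F_adm m).2 phi phiB; rewrite powR1.
Qed.

Lemma mid_sum_glued (xs : nat -> E) : mid_sum nr p glued xs =
  (\sum_(m <oo) (nr (c m) `^ p)%:E * mid_sum nr p (F m) xs)%E.
Proof.
pose b m k := psum p (fun j => nr (c m * F m k (xs j))).
rewrite [LHS](@nneseries_pair_bij _ g b) //.
  by apply: eq_eseriesr => m _; rewrite -mid_sumZ.
by move=> m k; exact: psum_ge0.
Qed.

End Gluing.

(* Blocks F m with mid_sum (F m) > 2^(m+1), glued with weights 2^-(m+1)
   (summing to 1), give an admissible family whose mid_sum diverges. *)
Lemma mid_norm_lty_of_mid_seq (xs : nat -> E) :
  mid_seq nr p xs -> (mid_norm nr p xs < +oo)%E.
Proof.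
move=> [_ xs_mid]; rewrite ltey; apply/negP => /eqP xs_oo.
pose d m : R := 1 / (2 ^ (m + 1))%:R.
have d_gt0 m : 0 < d m by rewrite divr_gt0 // ltr0n expn_gt0.
have d_sum : (\sum_(m <oo) (d m)%:E = 1)%E.
  apply/cvg_lim => //.
  by have := @cvg_geometric_eseries_half R 1 0; rewrite expr0 divr1.
have /choice [F FP] : forall m, exists fs,
    mid_admissible fs /\ (((d m)^-1)%:E < mid_sum nr p fs xs)%E.
  by move=> m; exact: mid_sum_gt_of_mid_norm_pinfty.
have /choice [c c_nr] : forall m, exists c, nr c = d m `^ p^-1.
  by move=> m; apply: nr_surj; exact: powR_ge0.
have c_p m : nr (c m) `^ p = d m by rewrite c_nr powRVp // ltW.
have [g g_bij] : exists g : nat -> nat * nat, set_bij setT setT g.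
  by apply/card_set_bijP; exact/card_esym/card_nat2.
have c_sum : (\sum_(m <oo) (nr (c m) `^ p)%:E <= 1)%E.
  by under eq_eseriesr do rewrite c_p; rewrite d_sum.
have G_adm := glued_admissible g_bij (fun m => (FP m).1) c_sum.
have := xs_mid _ (conj G_adm.1 (le_lt_trans G_adm.2 (ltry 1))).
apply/negP; rewrite -leNgt mid_sum_glued // -(nneseries1 R).
apply: lee_nneseries => // m _; rewrite c_p.
apply: le_trans (lee_wpmul2l _ (ltW (FP m).2)); last by rewrite lee_fin ltW.
by rewrite -EFinM mulfV ?gt_eqF.
Qed.

Lemma mid_seqP (xs : nat -> E) : mid_seq nr p xs <-> (mid_norm nr p xs < +oo)%E.
Proof. by split; [exact: mid_norm_lty_of_mid_seq | exact: mid_seq_of_mid_norm_lty]. Qed.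

End DualSpaces.

Hypothesis nr_norm : forall a : K, nr `|a| = nr a.

Lemma mid_norm_unit_seq j : mid_norm (E := K) nr p (unit_seq K j) = 1%E.
Proof.
have nr_e : nr `|unit_seq K j j| = 1 by rewrite /unit_seq eqxx nr_norm nr1.
apply/le_anti/andP; split; last first.
  rewrite -nr_e; apply: (@norming_le_mid_norm _ _ _ (fun x : K => x)) => //.
  by split => [a x y|x] //; rewrite nr_norm.
apply: ge_ereal_sup => _ [fs [fsD fsW] <-].
rewrite (poweRV_le p_gt0) ?mid_sum_ge0 // powR1.
have -> : mid_sum nr p fs (unit_seq K j) = psum p (fun n => nr (fs n 1)).
  apply: eq_eseriesr => n _; rewrite /psum (eseries_single (j := j)) => [|i ij].
    by rewrite /unit_seq eqxx.
  by rewrite /unit_seq (negPf ij) is_lin0 ?nr0 ?powR0 ?gt_eqF //; case: (fsD n).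
by have := psum_eval_le (1 : K) fsD ler01 fsW; rewrite normr1 nr1 mulr1 powR1.
Qed.

Theorem mid_finitely_determined_of_norming :
  (forall (E : normedModType K) (x : E),
     exists f, dual_ball nr f /\ nr (f x) = nr `|x|) ->
  mid_finitely_determined nr p.
Proof.
move=> norming; split; last exact: mid_norm_unit_seq.
move=> E; split; first exact: c00_mid_seq.
split.
  move=> xs _ j; have [f [fB fx]] := norming E (xs j).
  exact: norming_le_mid_norm fB fx.
split => xs; first by rewrite -mid_norm_trunc_sup; exact: mid_seqP.
by move=> _; exact: mid_norm_trunc_sup.
Qed.

End MidNorm.

Theorem proposition1p9 (R : realType) (p : R) (hp : 1 <= p) :
  mid_finitely_determined (K := R) (@Num.norm R R) p /\
  mid_finitely_determined (K := R[i]) (@Normc.normc R) p.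
Proof.
split; apply: mid_finitely_determined_of_norming.
- exact: normrM.
- exact: normr0.
- exact: normr1.
- exact: normr_ge0.
- by move=> t t0; exists t; rewrite ger0_norm.
- exact: hp.
- exact: normr_id.
- exact: real_norming_functional.
- exact: Normc.normcM.
- exact: Normc.normc0.
- exact: Normc.normc1.
- by case=> a b; exact: sqrtr_ge0.
- by move=> t t0; exists t%:C%C; rewrite normc_real ger0_norm.
- exact: hp.
- by case=> a b; rewrite normc_def normc_real ger0_norm ?sqrtr_ge0.
- exact: complex_norming_functional.
Qed.
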